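(* For the relativistic quantities $I_1$, $I_0$, $J_0$ defined in the context, let $\{I_i \leq 0\}$, $\{I_i \equiv 0\}$, $\{I_i \geq 0\}$ (and likewise $\{J_0 \leq 0\}$, etc.) denote the sets of all equations of state $\rho(p)$ such that, for all $p \leq p_{max}$, the respective quantity is $\leq 0$, $\equiv 0$, or $\geq 0$. Then \begin{align*} \{I_1 \leq 0\} &\subset \{I_0 \leq 0\} \subset \{J_0 \leq 0\} \\ \{I_1 \equiv 0\} &\equiv \{I_0 \equiv 0\}\equiv \{J_0 \equiv 0\}\\ \{I_1 \geq 0\} &\subset \{I_0 \geq 0\} \subset \{J_0 \geq 0\} \:. \end{align*}
   Context: General Relativity (units with $c=1$), static perfect fluids. Consider a barotropic equation of state $\rho(p)$ given on an interval $[0,p_{max}]$, piecewise ${\mathcal C}^0$ on $[0,p_{max}]$, with $\rho$ positive. Define $\Gamma(p) := \int_0^p dp^\prime\,(\rho(p^\prime)+ p^\prime)^{-1}$, and assume that $\Gamma(p)$ exists and that the limit $\lim_{p\rightarrow 0} \rho^{-1} p$ exists. Define \begin{align*} H_0(p) &:= \rho(p) + \rho(p) e^{-\Gamma(p)} + 6 p e^{-\Gamma(p)},\\ J_0(p) &:= \frac{1}{2 \rho}\, [1-e^{-\Gamma}] \,H_0(p) - 3 \rho^{-1} \int_0^p dp^\prime e^{-\Gamma(p^\prime)} \frac{1}{\rho(p^\prime)+p^\prime} H_0(p^\prime),\\ I_0(p) &:= 1 - e^{-\Gamma(p)} - 6 e^{-\Gamma(p)} \rho^{-1} p,\\ I_1(p)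 &:= 6 e^{-\Gamma} p \,\rho^{-2}\, \frac{d\rho}{dp} - 5 e^{-\Gamma} (\rho+p)^{-1}, \end{align*} where for $I_1$ the equation of state is required to be ${\mathcal C}^0[0,p_{max}]$ and piecewise ${\mathcal C}^1$. *)

From Stdlib Require Import Reals.
From Coquelicot Require Import Coquelicot.
Open Scope R_scope.

(* f is piecewise C^0 on [a,b]: there is a partition a = x_0 < ... < x_n = b
   such that on each open piece (x_i, x_{i+1}) f coincides with a function
   continuous on the closed piece [x_i, x_{i+1}] (i.e. f is continuous on each
   open piece with finite one-sided limits at its ends). *)
Definition piecewise_C0 (f : R -> R) (a b : R) : Prop :=
  exists (n : nat) (x : nat -> R),
    x 0%nat = a /\ x n = b /\
    (forall i, (i < n)%nat -> x i < x (S i)) /\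
    (forall i, (i < n)%nat -> exists g : R -> R,
        (forall t, x i <= t <= x (S i) -> continuous g t) /\
        (forall t, x i < t < x (S i) -> g t = f t)).

Definition piecewise_C1 (f : R -> R) (a b : R) : Prop :=
  exists (n : nat) (x : nat -> R),
    x 0%nat = a /\ x n = b /\
    (forall i, (i < n)%nat -> x i < x (S i)) /\
    (forall i, (i < n)%nat -> exists g g' : R -> R,
        (forall t, x i <= t <= x (S i) -> is_derive g t (g' t) /\ continuous g' t) /\
        (forall t, x i < t < x (S i) -> g t = f t)).

Definition C0_on (f : R -> R) (a b : R) : Prop :=
  forall t, a <= t <= b ->
    filterlim f (within (fun y => a <= y <= b) (locally t)) (locally (f t)).

Definition Gamma (rho : R -> R) (p : R) : R :=
  RInt_gen (fun q => / (rho q + q)) (at_right 0) (at_point p).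

Definition eos (rho : R -> R) (pmax : R) : Prop :=
  0 < pmax /\
  0 <= rho 0 /\
  (forall p, 0 < p <= pmax -> 0 < rho p) /\
  piecewise_C0 rho 0 pmax /\
  (forall p, 0 < p <= pmax ->
     ex_RInt_gen (fun q => / (rho q + q)) (at_right 0) (at_point p)) /\
  (exists L : R, filterlim (fun p => p / rho p) (at_right 0) (locally L)).

Definition eos1 (rho : R -> R) (pmax : R) : Prop :=
  eos rho pmax /\ C0_on rho 0 pmax /\ piecewise_C1 rho 0 pmax.

Definition H0 (rho : R -> R) (p : R) : R :=
  rho p + rho p * exp (- Gamma rho p) + 6 * p * exp (- Gamma rho p).

Definition J0 (rho : R -> R) (p : R) : R :=
  / (2 * rho p) * (1 - exp (- Gamma rho p)) * H0 rho p
  - 3 * / rho p *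
    RInt (fun q => exp (- Gamma rho q) * / (rho q + q) * H0 rho q) 0 p.

Definition I0 (rho : R -> R) (p : R) : R :=
  1 - exp (- Gamma rho p) - 6 * exp (- Gamma rho p) * / rho p * p.

(* I_1 at p, where d is the value of d rho / dp at p. *)
Definition I1 (rho : R -> R) (p d : R) : R :=
  6 * exp (- Gamma rho p) * p * / (rho p ^ 2) * d
  - 5 * exp (- Gamma rho p) * / (rho p + p).

Definition holds_on (pmax : R) (Q : R -> R) (P : R -> Prop) : Prop :=
  forall p, 0 < p <= pmax -> P (Q p).

Definition I1_holds_on (rho : R -> R) (pmax : R) (P : R -> Prop) : Prop :=
  forall p d, 0 < p < pmax -> is_derive rho p d -> P (I1 rho p d).

From Stdlib Require Import Reals Lra Lia.
From Coquelicot Require Import Coquelicot.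
Open Scope R_scope.

(* Where rho is differentiable, I0' = I1; moreover I0(0+) = 0, since Gamma(0+) = 0 and
   p / rho -> 0 (a positive limit would make Gamma diverge logarithmically).  So along the
   pieces of rho the sign of I1 is inherited by I0, and I0 = 0 forces I1 = 0.
   For J0 put Phi(p) = int_0^p e^-Gamma H0 / (rho + q) dq - 2 p e^-Gamma (J0_potential).
   Then J0 = (1 + e^-Gamma) / 2 * I0 - 3 Phi / rho,  Phi' = - e^-Gamma rho / (rho + p) * I0,
   and Phi(0+) = 0, so -Phi, hence J0, has the sign of I0.  Conversely, if J0 = 0 then
   I0 is a positive multiple of Phi, so Phi^2 is nonincreasing from 0 and vanishes. *)

Section FilterlimArith.

Context {T : Type} {F : (T -> Prop) -> Prop} {FF : Filter F}.

Lemma filterlim_Rplus (f g : T -> R) (a b : R) :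
  filterlim f F (locally a) -> filterlim g F (locally b) ->
  filterlim (fun x => f x + g x) F (locally (a + b)).
Proof. intros Hf Hg. exact (filterlim_comp_2 f g Rplus Hf Hg (filterlim_plus a b)). Qed.

Lemma filterlim_Rmult (f g : T -> R) (a b : R) :
  filterlim f F (locally a) -> filterlim g F (locally b) ->
  filterlim (fun x => f x * g x) F (locally (a * b)).
Proof. intros Hf Hg. exact (filterlim_comp_2 f g Rmult Hf Hg (filterlim_mult a b)). Qed.

Lemma filterlim_continuous_comp (f : T -> R) (h : R -> R) (a : R) :
  filterlim f F (locally a) -> continuous h a ->
  filterlim (fun x => h (f x)) F (locally (h a)).
Proof. intros Hf Hh. exact (filterlim_comp _ _ _ f h F _ _ Hf Hh). Qed.

Lemma filterlim_Ropp (f : T -> R) (a : R) :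
  filterlim f F (locally a) -> filterlim (fun x => - f x) F (locally (- a)).
Proof.
  intros Hf. apply (filterlim_continuous_comp f Ropp a Hf).
  apply (ex_derive_continuous (K := R_AbsRing) (V := R_NormedModule)). auto_derive. trivial.
Qed.

Lemma filterlim_Rminus (f g : T -> R) (a b : R) :
  filterlim f F (locally a) -> filterlim g F (locally b) ->
  filterlim (fun x => f x - g x) F (locally (a - b)).
Proof. intros Hf Hg. apply filterlim_Rplus; [exact Hf | exact (filterlim_Ropp g b Hg)]. Qed.

Lemma filterlim_Rinv (f : T -> R) (a : R) :
  a <> 0 -> filterlim f F (locally a) -> filterlim (fun x => / f x) F (locally (/ a)).
Proof.
  intros Ha Hf. apply (filterlim_continuous_comp f Rinv a Hf).
  apply (ex_derive_continuous (K := R_AbsRing) (V := R_NormedModule)). auto_derive. exact Ha.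
Qed.

Lemma filterlim_Rexp (f : T -> R) (a : R) :
  filterlim f F (locally a) -> filterlim (fun x => exp (f x)) F (locally (exp a)).
Proof.
  intros Hf. apply (filterlim_continuous_comp f exp a Hf).
  apply (ex_derive_continuous (K := R_AbsRing) (V := R_NormedModule)). auto_derive. trivial.
Qed.

Lemma filterlim_locally_eq (f : T -> R) (a b : R) :
  a = b -> filterlim f F (locally a) -> filterlim f F (locally b).
Proof. intros <-. trivial. Qed.

End FilterlimArith.

(* Dispatching on the syntax of the goal matters: letting [apply] try each lemma in turn
   makes unification unfold [exp], and the tactic becomes very slow. *)
Ltac filterlim_arith :=
  repeat match goal with
  | H : ?G |- ?G => exact H
  | |- filterlim (fun _ => ?c) _ _ => apply filterlim_const
  | |- filterlim (Rmult ?a) ?F ?G => change (filterlim (fun y => a * y) F G)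
  | |- filterlim (fun _ => _ - _) _ _ => apply filterlim_Rminus
  | |- filterlim (fun _ => _ + _) _ _ => apply filterlim_Rplus
  | |- filterlim (fun _ => _ * _) _ _ => apply filterlim_Rmult
  | |- filterlim (fun _ => - _) _ _ => apply filterlim_Ropp
  | |- filterlim (fun _ => exp _) _ _ => apply filterlim_Rexp
  | |- filterlim (fun _ => / _) _ _ => apply filterlim_Rinv
  end; try assumption.

Lemma at_right_lt (c d : R) : c < d -> at_right c (fun y => c < y < d).
Proof.
  intros Hcd. apply (locally_interval _ c m_infty d); [exact I | exact Hcd |].
  intros y _ Hy Hcy. simpl in Hy. lra.
Qed.

Lemma at_left_gt (c d : R) : c < d -> at_left d (fun y => c < y < d).
Proof.
  intros Hcd. apply (locally_interval _ d c p_infty); [exact Hcd | exact I |].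
  intros y Hy _ Hyd. simpl in Hy. lra.
Qed.

Lemma locally_between (a b t : R) : a < t < b -> locally t (fun y => a < y < b).
Proof. intros Ht. apply (locally_interval _ t a b); simpl; tauto. Qed.

Lemma filterlim_ge_const {F : (R -> Prop) -> Prop} {FF : ProperFilter F} (f : R -> R) m v :
  F (fun y => m <= f y) -> filterlim f F (locally v) -> m <= v.
Proof. intros Hm Hf. exact (filterlim_le (fun _ => m) f m v Hm (filterlim_const m) Hf). Qed.

Lemma filterlim_le_const {F : (R -> Prop) -> Prop} {FF : ProperFilter F} (f : R -> R) m v :
  F (fun y => f y <= m) -> filterlim f F (locally v) -> v <= m.
Proof. intros Hm Hf. exact (filterlim_le f (fun _ => m) v m Hm Hf (filterlim_const m)). Qed.

Lemma C0_on_filterlim (f : R -> R) (a b c : R) (G : (R -> Prop) -> Prop) {FG : Filter G} :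
  C0_on f a b -> a <= c <= b -> filter_le G (locally c) -> G (fun y => a <= y <= b) ->
  filterlim f G (locally (f c)).
Proof.
  intros Hf Hc HG HD P HP. unfold filtermap.
  apply (filter_imp (fun y => (a <= y <= b -> P (f y)) /\ a <= y <= b)).
  - intros y [H1 H2]. exact (H1 H2).
  - apply filter_and; [apply HG, (Hf c Hc P HP) | exact HD].
Qed.

Lemma C0_on_at_right (f : R -> R) (a b c : R) :
  C0_on f a b -> a <= c < b -> filterlim f (at_right c) (locally (f c)).
Proof.
  intros Hf Hc. apply (C0_on_filterlim f a b c _ Hf); [lra | apply filter_le_within |].
  apply (filter_imp (fun y => c < y < b)); [intros y Hy; lra | apply at_right_lt; lra].
Qed.

Lemma C0_on_at_left (f : R -> R) (a b c : R) :
  C0_on f a b -> a < c <= b -> filterlim f (at_left c) (locally (f c)).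
Proof.
  intros Hf Hc. apply (C0_on_filterlim f a b c _ Hf); [lra | apply filter_le_within |].
  apply (filter_imp (fun y => a < y < c)); [intros y Hy; lra | apply at_left_gt; lra].
Qed.

Lemma C0_on_continuous (f : R -> R) (a b c : R) :
  C0_on f a b -> a < c < b -> continuous f c.
Proof.
  intros Hf Hc. apply (C0_on_filterlim f a b c _ Hf); [lra | apply filter_le_refl |].
  apply (filter_imp (fun y => a < y < b)); [intros y Hy; lra | apply locally_between; lra].
Qed.

Lemma C0_on_restrict (f : R -> R) (a b c : R) : C0_on f a b -> a <= c -> C0_on f c b.
Proof.
  intros Hf Hac t Ht P HP. unfold filtermap, within.
  apply (filter_imp (fun y => a <= y <= b -> P (f y))); [intros y Hy Hy'; apply Hy; lra |].
  apply (Hf t); [lra | exact HP].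
Qed.

Lemma filterlim_id_within (D : R -> Prop) (c : R) :
  filterlim (fun y => y) (within D (locally c)) (locally c).
Proof. apply (filterlim_filter_le_1 (fun y => y) (filter_le_within D)). apply filterlim_id. Qed.

Lemma lipschitz_C0_on (f : R -> R) (a b K : R) :
  (forall s t, a <= s <= t -> t <= b -> Rabs (f t - f s) <= K * (t - s)) -> C0_on f a b.
Proof.
  intros Hlip c Hc. apply filterlim_locally. intros eps.
  assert (Hd : 0 < eps / (Rabs K + 1)) by (apply Rdiv_lt_0_compat; [apply cond_pos | pose proof (Rabs_pos K); lra]).
  exists (mkposreal _ Hd). intros y Hy Hyab. change (Rabs (y - c) < eps / (Rabs K + 1)) in Hy.
  change (Rabs (f y - f c) < eps).
  assert (Hfy : Rabs (f y - f c) <= Rabs K * Rabs (y - c)).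
  { destruct (Rle_or_lt c y).
    - rewrite (Rabs_right (y - c)) by lra. eapply Rle_trans; [apply Hlip; lra |].
      apply Rmult_le_compat_r; [lra | apply Rle_abs].
    - rewrite Rabs_minus_sym, (Rabs_left (y - c)), Ropp_minus_distr by lra.
      eapply Rle_trans; [apply Hlip; lra |].
      apply Rmult_le_compat_r; [lra | apply Rle_abs]. }
  assert (Rabs K * Rabs (y - c) <= Rabs K * (eps / (Rabs K + 1)))
    by (apply Rmult_le_compat_l; [apply Rabs_pos | lra]).
  assert (Rabs K * (eps / (Rabs K + 1)) < eps).
  { pose proof (cond_pos eps). pose proof (Rabs_pos K).
    apply (Rmult_lt_reg_r (Rabs K + 1)); [lra |]. field_simplify; lra. }
  lra.
Qed.

Lemma C0_on_scal (f : R -> R) (s a b : R) : C0_on f a b -> C0_on (fun t => s * f t) a b.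
Proof. intros Hf t Ht. apply filterlim_Rmult; [apply filterlim_const | exact (Hf t Ht)]. Qed.

Lemma le_of_derive_nonneg (P : R -> R) (a b : R) :
  (forall t, a < t < b -> exists d, is_derive P t d /\ 0 <= d) ->
  forall s t, a < s -> s <= t -> t < b -> P s <= P t.
Proof.
  intros Hd s t Has Hst Htb.
  assert (HD : forall y, a < y < b -> is_derive P y (Derive P y) /\ 0 <= Derive P y).
  { intros y Hy. destruct (Hd y Hy) as [d [HPd Hd0]].
    rewrite (is_derive_unique P y d HPd). split; assumption. }
  destruct (MVT_gen P s t (Derive P)) as [c [Hc Heq]].
  - intros y Hy. rewrite Rmin_left, Rmax_right in Hy by lra. apply HD. lra.
  - intros y Hy. rewrite Rmin_left, Rmax_right in Hy by lra.
    apply continuity_pt_filterlim, (ex_derive_continuous (K := R_AbsRing) (V := R_NormedModule)).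
    exists (Derive P y). apply HD. lra.
  - rewrite Rmin_left, Rmax_right in Hc by lra.
    assert (0 <= Derive P c * (t - s)) by (apply Rmult_le_pos; [apply HD | ]; lra).
    lra.
Qed.

Lemma lower_bound_on_piece (P : R -> R) (a b va : R) : a < b ->
  (forall t, a < t < b -> exists d, is_derive P t d /\ 0 <= d) ->
  filterlim P (at_right a) (locally va) -> filterlim P (at_left b) (locally (P b)) ->
  forall t, a < t <= b -> va <= P t.
Proof.
  intros Hab Hd Hva Hb.
  assert (Hopen : forall t, a < t < b -> va <= P t).
  { intros t Ht. apply (filterlim_le_const (F := at_right a) P (P t) va); [| exact Hva].
    apply (filter_imp (fun y => a < y < t)); [| apply at_right_lt; lra].
    intros y Hy. apply (le_of_derive_nonneg P a b Hd); lra. }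
  intros t [Hat [Htb | ->]]; [apply Hopen; lra |].
  apply (filterlim_ge_const (F := at_left b) P va (P b)); [| exact Hb].
  apply (filter_imp (fun y => a < y < b)); [| apply at_left_gt; lra].
  exact Hopen.
Qed.

Definition partition (n : nat) (x : nat -> R) (a b : R) : Prop :=
  x O = a /\ x n = b /\ forall i, (i < n)%nat -> x i < x (S i).

Lemma partition_le (n : nat) (x : nat -> R) (a b : R) : partition n x a b ->
  forall i j, (i <= j <= n)%nat -> x i <= x j.
Proof.
  intros (_ & _ & Hinc) i j Hij. induction j as [| j IH].
  - replace i with O by lia. lra.
  - destruct (Nat.eq_dec i (S j)) as [-> | Hne]; [lra |].
    specialize (IH ltac:(lia)). specialize (Hinc j ltac:(lia)). lra.
Qed.

Lemma partition_bounds (n : nat) (x : nat -> R) (a b : R) : partition n x a b ->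
  forall i, (i <= n)%nat -> a <= x i <= b.
Proof.
  intros Hx i Hi. pose proof Hx as (H0 & Hn & _). rewrite <- H0, <- Hn at 1.
  split; apply (partition_le n x a b Hx); lia.
Qed.

Lemma partition_lower_bound (P : R -> R) (n : nat) (x : nat -> R) (a b v : R) :
  partition n x a b ->
  (forall i, (i < n)%nat -> forall t, x i < t < x (S i) -> exists d, is_derive P t d /\ 0 <= d) ->
  filterlim P (at_right a) (locally v) ->
  (forall c, a < c <= b -> C0_on P c b) ->
  forall t, a < t <= b -> v <= P t.
Proof.
  intros Hx Hd Hv HC. pose proof Hx as (H0 & Hn & Hinc).
  assert (Hk : forall k, (k <= n)%nat -> forall t, a < t <= x k -> v <= P t).
  { induction k as [| k IH]; intros Hk t Ht; [lra |].
    destruct (Rle_or_lt t (x k)) as [Htk | Htk]; [apply IH; [lia | lra] |].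
    pose proof (Hinc k ltac:(lia)). pose proof (partition_bounds n x a b Hx (S k) Hk).
    pose proof (partition_bounds n x a b Hx k ltac:(lia)).
    assert (Hva : exists va, v <= va /\ filterlim P (at_right (x k)) (locally va)).
    { destruct k as [| k]; [exists v; rewrite H0; split; [lra | exact Hv] |].
      pose proof (partition_le n x a b Hx 1 (S k) ltac:(lia)). pose proof (Hinc O ltac:(lia)).
      exists (P (x (S k))). split; [apply IH; [lia | lra] |].
      apply (C0_on_at_right P (x (S k)) b); [apply HC |]; lra. }
    destruct Hva as [va [Hvva Hva]].
    apply (Rle_trans _ va); [exact Hvva |].
    apply (lower_bound_on_piece P (x k) (x (S k))); [lra | exact (Hd k ltac:(lia)) | exact Hva | | lra].
    apply (C0_on_at_left P ((x k + x (S k)) / 2) b); [apply HC |]; lra. }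
  rewrite <- Hn. apply Hk. lia.
Qed.

Lemma ex_RInt_open_continuous (f : R -> R) (a b la lb : R) : a < b ->
  (forall t, a < t < b -> continuous f t) ->
  filterlim f (at_right a) (locally la) -> filterlim f (at_left b) (locally lb) ->
  ex_RInt f a b.
Proof.
  intros Hab Hc Hla Hlb.
  destruct (C0_extension_lt f la lb a b Hab Hc Hla Hlb) as [g [Hg [Hgf _]]].
  apply (ex_RInt_ext g); [intros t Ht; rewrite Rmin_left, Rmax_right in Ht by lra; apply Hgf, Ht |].
  apply (ex_RInt_continuous (V := R_CompleteNormedModule)). intros t _. apply Hg.
Qed.

Lemma ex_RInt_partition (f : R -> R) (n : nat) (x : nat -> R) (a b : R) :
  partition n x a b -> (forall i, (i < n)%nat -> ex_RInt f (x i) (x (S i))) ->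
  forall p, a <= p <= b -> ex_RInt f a p.
Proof.
  intros Hx Hf. pose proof Hx as (H0 & Hn & _).
  assert (Hk : forall k, (k <= n)%nat -> forall p, a <= p <= x k -> ex_RInt f a p).
  { induction k as [| k IH]; intros Hk p Hp.
    - replace p with a by lra. apply ex_RInt_point.
    - destruct (Rle_or_lt p (x k)) as [Hpk | Hpk]; [apply IH; [lia | lra] |].
      pose proof (partition_bounds n x a b Hx k ltac:(lia)).
      apply (ex_RInt_Chasles _ a (x k)); [apply IH; [lia | lra] |].
      apply (ex_RInt_Chasles_1 (V := R_CompleteNormedModule) f (x k) p (x (S k))); [lra |].
      apply Hf. lia. }
  intros p Hp. apply (Hk n); [lia | lra].
Qed.

Lemma piecewise_C0_partition (f : R -> R) (a b : R) : piecewise_C0 f a b ->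
  exists n x, partition n x a b /\ forall i, (i < n)%nat ->
    (forall t, x i < t < x (S i) -> continuous f t) /\
    exists la lb, filterlim f (at_right (x i)) (locally la) /\
                  filterlim f (at_left (x (S i))) (locally lb).
Proof.
  intros (n & x & H0 & Hn & Hinc & Hg). exists n, x. split; [repeat split; assumption |].
  intros i Hi. destruct (Hg i Hi) as [g [Hgc Hgf]]. pose proof (Hinc i Hi).
  split; [| exists (g (x i)), (g (x (S i))); split].
  - intros t Ht. apply (continuous_ext_loc f g); [| apply Hgc; lra].
    apply (filter_imp (fun y => x i < y < x (S i))); [exact Hgf | apply locally_between, Ht].
  - apply (filterlim_ext_loc g); [apply (filter_imp _ _ Hgf), at_right_lt; lra |].
    apply (filterlim_filter_le_1 g (filter_le_within _)), Hgc. lra.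
  - apply (filterlim_ext_loc g); [apply (filter_imp _ _ Hgf), at_left_gt; lra |].
    apply (filterlim_filter_le_1 g (filter_le_within _)), Hgc. lra.
Qed.

Lemma piecewise_C1_partition (f : R -> R) (a b : R) : piecewise_C1 f a b ->
  exists n x, partition n x a b /\
    forall i, (i < n)%nat -> forall t, x i < t < x (S i) -> ex_derive f t.
Proof.
  intros (n & x & H0 & Hn & Hinc & Hg). exists n, x. split; [repeat split; assumption |].
  intros i Hi t Ht. destruct (Hg i Hi) as [g [g' [Hgd Hgf]]].
  exists (g' t). apply (is_derive_ext_loc g); [| apply Hgd; lra].
  apply (filter_imp (fun y => x i < y < x (S i))); [exact Hgf | apply locally_between, Ht].
Qed.

Lemma ex_RInt_of_ex_RInt_gen (f : R -> R) (c b : R) :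
  ex_RInt_gen f (at_right c) (at_point b) ->
  exists d, c < d /\ forall a, c < a < d -> ex_RInt f a b.
Proof.
  intros [l Hl].
  destruct (Hl (fun _ => True) (filter_true)) as [Q Pb [d Hd] HPb HQP].
  exists (c + d). split; [pose proof (cond_pos d); lra |]. intros a Ha.
  destruct (HQP a b) as [y [Hy _]]; [| exact HPb | exists y; exact Hy].
  apply Hd; [| lra]. change (Rabs (a - c) < d). rewrite Rabs_right; lra.
Qed.

Lemma is_RInt_gen_at_right_filterlim (f : R -> R) (c b l : R) :
  is_RInt_gen f (at_right c) (at_point b) l ->
  filterlim (fun a => RInt f a b) (at_right c) (locally l).
Proof.
  intros Hl P HP. destruct (Hl P HP) as [Q Pb HQ HPb HQP]. unfold filtermap.
  apply (filter_imp Q); [| exact HQ]. intros a Ha.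
  destruct (HQP a b Ha HPb) as [y [Hy Py]]. simpl in Hy. rewrite (is_RInt_unique f a b y Hy). exact Py.
Qed.

Lemma RInt_scal_inv (c a b : R) : 0 < a <= b -> RInt (fun q => c / q) a b = c * (ln b - ln a).
Proof.
  intros Hab. apply is_RInt_unique.
  replace (c * (ln b - ln a)) with (minus (c * ln b) (c * ln a))
    by (unfold minus, plus, opp; simpl; ring).
  apply (is_RInt_derive (fun q => c * ln q)).
  - intros q Hq. rewrite Rmin_left, Rmax_right in Hq by lra.
    auto_derive; [lra | field; lra].
  - intros q Hq. rewrite Rmin_left, Rmax_right in Hq by lra.
    apply (ex_derive_continuous (K := R_AbsRing) (V := R_NormedModule)). auto_derive. lra.
Qed.

Lemma inv_sum_ge_of_ratio_gt (r q L : R) : 0 < L -> 0 < r -> 0 < q -> L / 2 < q / r ->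
  L / (2 + L) / q <= / (r + q).
Proof.
  intros HL Hr Hq Hqr.
  assert (Hlt : L / 2 * r < q / r * r) by (apply Rmult_lt_compat_r; lra).
  replace (q / r * r) with q in Hlt by (field; lra).
  assert (Hdiff : / (r + q) - L / (2 + L) / q = (2 * q - L * r) / ((2 + L) * q * (r + q)))
    by (field; lra).
  assert (0 <= (2 * q - L * r) / ((2 + L) * q * (r + q))).
  { apply Rdiv_le_0_compat; [lra |]. apply Rmult_lt_0_compat; [apply Rmult_lt_0_compat |]; lra. }
  lra.
Qed.

Section EquationOfState.

Variables (rho : R -> R) (pmax : R).
Hypothesis Heos : eos rho pmax.

Local Notation w := (fun q => / (rho q + q)).

Lemma pmax_pos : 0 < pmax.
Proof. apply Heos. Qed.

Lemma rho_pos (p : R) : 0 < p <= pmax -> 0 < rho p.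
Proof. apply Heos. Qed.

Lemma ex_RInt_w (a b : R) : 0 < a -> a <= b -> b <= pmax -> ex_RInt w a b.
Proof.
  intros Ha Hab Hb. pose proof Heos as (_ & _ & _ & _ & Hint & _).
  destruct (ex_RInt_of_ex_RInt_gen w 0 b (Hint b ltac:(lra))) as [d [Hd Hex]].
  apply (ex_RInt_Chasles_2 (V := R_CompleteNormedModule) w (Rmin (d / 2) a)).
  - pose proof (Rmin_r (d / 2) a). lra.
  - apply Hex. pose proof (Rmin_l (d / 2) a). split; [apply Rmin_pos |]; lra.
Qed.

Lemma is_RInt_gen_Gamma (p : R) : 0 < p <= pmax ->
  is_RInt_gen w (at_right 0) (at_point p) (Gamma rho p).
Proof.
  intros Hp. pose proof Heos as (_ & _ & _ & _ & Hint & _).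
  apply (RInt_gen_correct (V := R_CompleteNormedModule)), Hint, Hp.
Qed.

Lemma Gamma_Chasles (a b : R) : 0 < a <= pmax -> 0 < b <= pmax ->
  Gamma rho b = Gamma rho a + RInt w a b.
Proof.
  intros Ha Hb.
  assert (Hab : is_RInt_gen w (at_point a) (at_point b) (RInt w a b)).
  { apply (is_RInt_gen_at_point (V := R_NormedModule)), (RInt_correct (V := R_CompleteNormedModule)).
    destruct (Rle_or_lt a b).
    - apply ex_RInt_w; lra.
    - apply ex_RInt_swap, ex_RInt_w; lra. }
  pose proof (is_RInt_gen_Chasles w a _ _ (is_RInt_gen_Gamma a Ha) Hab) as Hb'.
  unfold Gamma at 1. exact (is_RInt_gen_unique (V := R_CompleteNormedModule) _ _ Hb').
Qed.

Lemma Gamma_at_right_0 : filterlim (Gamma rho) (at_right 0) (locally 0).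
Proof.
  pose proof pmax_pos as Hp.
  apply (filterlim_ext_loc (fun a => Gamma rho pmax - RInt w a pmax)).
  - apply (filter_imp (fun a => 0 < a < pmax)); [| apply at_right_lt, Hp].
    intros a Ha. rewrite (Gamma_Chasles a pmax) by lra. ring.
  - apply (filterlim_locally_eq _ (Gamma rho pmax - Gamma rho pmax)); [ring |].
    apply filterlim_Rminus; [apply filterlim_const |].
    apply is_RInt_gen_at_right_filterlim, is_RInt_gen_Gamma. lra.
Qed.

Lemma Gamma_nonneg (p : R) : 0 < p <= pmax -> 0 <= Gamma rho p.
Proof.
  intros Hp. apply (filterlim_ge_const (F := at_right 0) (fun a => RInt w a p)).
  - apply (filter_imp (fun a => 0 < a < p)); [| apply at_right_lt; lra].
    intros a Ha. apply RInt_ge_0; [lra | apply ex_RInt_w; lra |].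
    intros q Hq. left. apply Rinv_0_lt_compat. pose proof (rho_pos q). lra.
  - apply is_RInt_gen_at_right_filterlim, is_RInt_gen_Gamma, Hp.
Qed.

Lemma Gamma_C0_on (c : R) : 0 < c -> C0_on (Gamma rho) c pmax.
Proof.
  intros Hc. apply (lipschitz_C0_on _ _ _ (/ c)). intros s t Hs Ht.
  rewrite (Gamma_Chasles s t) by lra.
  rewrite Rplus_minus_l, Rmult_comm. apply abs_RInt_le_const; [lra | apply ex_RInt_w; lra |].
  intros q Hq. pose proof (rho_pos q). rewrite Rabs_right.
  - apply Rinv_le_contravar; lra.
  - left. apply Rinv_0_lt_compat. lra.
Qed.

Lemma is_derive_Gamma (t : R) : 0 < t < pmax -> continuous rho t ->
  is_derive (Gamma rho) t (/ (rho t + t)).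
Proof.
  intros Ht Hc. pose proof (rho_pos t).
  apply (is_derive_ext_loc (fun b => Gamma rho (t / 2) + RInt w (t / 2) b)).
  - apply (filter_imp (fun b => t / 2 < b < pmax)); [| apply locally_between; lra].
    intros b Hb. symmetry. apply Gamma_Chasles; lra.
  - replace (/ (rho t + t)) with (0 + / (rho t + t)) by ring.
    apply (is_derive_plus (K := R_AbsRing) (V := R_NormedModule)); [now auto_derive |].
    apply (is_derive_RInt (V := R_NormedModule) w _ (t / 2)).
    + apply (filter_imp (fun b => t / 2 < b < pmax)); [| apply locally_between; lra].
      intros b Hb. apply (RInt_correct (V := R_CompleteNormedModule)), ex_RInt_w; lra.
    + apply filterlim_Rinv; [lra |]. apply filterlim_Rplus; [exact Hc | apply filterlim_id].
Qed.

Lemma w_not_ge_scal_inv (c b : R) : 0 < c -> 0 < b <= pmax ->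
  ~ (forall q, 0 < q <= b -> c / q <= / (rho q + q)).
Proof.
  intros Hc Hb Hlow.
  assert (Hlog : forall a, 0 < a < b -> c * (ln b - ln a) <= Gamma rho b).
  { intros a Ha. rewrite (Gamma_Chasles a b), <- RInt_scal_inv by lra.
    assert (0 <= Gamma rho a) by (apply Gamma_nonneg; lra).
    enough (RInt (fun q => c / q) a b <= RInt w a b) by lra.
    apply RInt_le; [lra | | apply ex_RInt_w; lra |].
    - apply (ex_RInt_continuous (V := R_CompleteNormedModule)). intros q Hq.
      rewrite Rmin_left, Rmax_right in Hq by lra.
      apply (ex_derive_continuous (K := R_AbsRing) (V := R_NormedModule)). auto_derive. lra.
    - intros q Hq. apply Hlow. lra. }
  set (e := exp (- (Gamma rho b / c) - 1)).
  assert (He : 0 < e < 1).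
  { split; [apply exp_pos |]. unfold e. rewrite <- exp_0 at 2. apply exp_increasing.
    pose proof (Gamma_nonneg b Hb).
    assert (0 <= Gamma rho b / c) by (apply Rdiv_le_0_compat; lra). lra. }
  specialize (Hlog (b * e) ltac:(split; nra)).
  unfold e in Hlog. rewrite ln_mult, ln_exp in Hlog by (lra || apply exp_pos).
  replace (c * (ln b - (ln b + (- (Gamma rho b / c) - 1)))) with (Gamma rho b + c) in Hlog
    by (field; lra).
  lra.
Qed.

Lemma ratio_at_right_0 : filterlim (fun p => p / rho p) (at_right 0) (locally 0).
Proof.
  pose proof Heos as (Hp & _ & _ & _ & _ & [L HL]).
  assert (HL0 : 0 <= L).
  { apply (filterlim_ge_const (F := at_right 0) (fun p => p / rho p) 0 L); [| exact HL].
    apply (filter_imp (fun p => 0 < p < pmax)); [| apply at_right_lt, Hp].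
    intros p Hp'. left. apply Rdiv_lt_0_compat; [| apply rho_pos]; lra. }
  destruct HL0 as [HLpos | <-]; [exfalso | exact HL].
  assert (Hnear : at_right 0 (fun q => (0 < q < pmax) /\ Rabs (q / rho q - L) < L / 2)).
  { apply filter_and; [apply at_right_lt, Hp |].
    assert (HL2 : 0 < L / 2) by lra.
    exact (proj1 (filterlim_locally _ L) HL (mkposreal _ HL2)). }
  destruct Hnear as [d Hd]. pose proof (cond_pos d).
  assert (Hin : forall q, 0 < q <= d / 2 -> (0 < q < pmax) /\ Rabs (q / rho q - L) < L / 2).
  { intros q Hq. apply Hd; [| lra]. change (Rabs (q - 0) < d). rewrite Rabs_right; lra. }
  apply (w_not_ge_scal_inv (L / (2 + L)) (d / 2)).
  - apply Rdiv_lt_0_compat; lra.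
  - split; [lra |]. apply Rlt_le, Hin. lra.
  - intros q Hq. destruct (Hin q Hq) as [Hq' Hratio]. apply Rabs_def2 in Hratio.
    apply inv_sum_ge_of_ratio_gt; [lra | apply rho_pos; lra | lra | lra].
Qed.

Lemma exp_neg_Gamma_at_right_0 : filterlim (fun p => exp (- Gamma rho p)) (at_right 0) (locally 1).
Proof.
  apply (filterlim_locally_eq _ (exp (- 0))); [rewrite Ropp_0; apply exp_0 |].
  apply filterlim_Rexp, filterlim_Ropp, Gamma_at_right_0.
Qed.

Lemma I0_at_right_0 : filterlim (I0 rho) (at_right 0) (locally 0).
Proof.
  pose proof exp_neg_Gamma_at_right_0 as Hu. pose proof ratio_at_right_0 as Hratio.
  apply (filterlim_ext_loc (fun q => 1 - exp (- Gamma rho q) - 6 * exp (- Gamma rho q) * (q / rho q))).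
  - apply filter_forall. intros q. unfold I0, Rdiv. ring.
  - apply (filterlim_locally_eq _ (1 - 1 - 6 * 1 * 0)); [ring |]. filterlim_arith.
Qed.

Lemma I0_C0_on (c : R) : 0 < c -> C0_on rho 0 pmax -> C0_on (I0 rho) c pmax.
Proof.
  intros Hc HC t Ht. pose proof (rho_pos t ltac:(lra)).
  pose proof (C0_on_restrict rho 0 pmax c HC ltac:(lra) t Ht).
  pose proof (Gamma_C0_on c Hc t Ht). pose proof (filterlim_id_within (fun y => c <= y <= pmax) t).
  unfold I0. filterlim_arith. lra.
Qed.

Lemma is_derive_I0 (t d : R) : 0 < t < pmax -> is_derive rho t d ->
  is_derive (I0 rho) t (I1 rho t d).
Proof.
  intros Ht Hd. pose proof (rho_pos t ltac:(lra)).
  assert (HG := is_derive_Gamma t Ht (ex_derive_continuous rho t (ex_intro _ d Hd))).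
  unfold I0, I1. auto_derive.
  - repeat split; try (exists (/ (rho t + t)); exact HG); try (exists d; exact Hd). lra.
  - replace (Derive (fun x => Gamma rho x) t) with (/ (rho t + t))
      by (symmetry; apply is_derive_unique; exact HG).
    replace (Derive (fun x => rho x) t) with d by (symmetry; apply is_derive_unique; exact Hd).
    field. lra.
Qed.

Lemma I0_sign_of_I1_sign (s : R) : C0_on rho 0 pmax -> piecewise_C1 rho 0 pmax ->
  I1_holds_on rho pmax (fun v => 0 <= s * v) -> holds_on pmax (I0 rho) (fun v => 0 <= s * v).
Proof.
  intros HC HC1 HI p Hp. cbv beta.
  destruct (piecewise_C1_partition rho 0 pmax HC1) as (n & x & Hx & Hd).
  apply (partition_lower_bound (fun t => s * I0 rho t) n x 0 pmax 0 Hx).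
  - intros i Hi t Ht. destruct (Hd i Hi t Ht) as [d Hrd].
    pose proof (partition_bounds n x 0 pmax Hx i ltac:(lia)).
    pose proof (partition_bounds n x 0 pmax Hx (S i) ltac:(lia)).
    exists (s * I1 rho t d). split.
    + apply (is_derive_scal (fun t => I0 rho t)), is_derive_I0; [lra | exact Hrd].
    + apply HI; [lra | exact Hrd].
  - apply (filterlim_locally_eq _ (s * 0)); [ring |].
    apply filterlim_Rmult; [apply filterlim_const | exact I0_at_right_0].
  - intros c Hc. apply C0_on_scal, I0_C0_on; [lra | exact HC].
  - exact Hp.
Qed.

Lemma I1_zero_of_I0_zero :
  holds_on pmax (I0 rho) (fun v => v = 0) -> I1_holds_on rho pmax (fun v => v = 0).
Proof.
  intros HI p d Hp Hd.
  assert (Hconst : is_derive (I0 rho) p 0).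
  { apply (is_derive_ext_loc (fun _ => 0)); [| now auto_derive].
    apply (filter_imp (fun y => 0 < y < pmax)); [| apply locally_between; lra].
    intros y Hy. symmetry. apply HI. lra. }
  rewrite <- (is_derive_unique _ _ _ (is_derive_I0 p d Hp Hd)).
  exact (is_derive_unique _ _ _ Hconst).
Qed.

Definition J0_integrand (q : R) : R := exp (- Gamma rho q) * / (rho q + q) * H0 rho q.

Definition J0_potential (p : R) : R := RInt J0_integrand 0 p - 2 * p * exp (- Gamma rho p).

Lemma J0_decomposition (p : R) : 0 < p <= pmax ->
  J0 rho p = (1 + exp (- Gamma rho p)) / 2 * I0 rho p - 3 * J0_potential p / rho p.
Proof.
  intros Hp. pose proof (rho_pos p Hp).
  unfold J0, J0_potential, J0_integrand, I0, H0. field. lra.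
Qed.

Lemma J0_integrand_split (q : R) : 0 < q <= pmax ->
  J0_integrand q = exp (- Gamma rho q) * (1 + exp (- Gamma rho q)) * (1 - q / (rho q + q))
                   + 6 * (exp (- Gamma rho q) * exp (- Gamma rho q)) * (q / (rho q + q)).
Proof. intros Hq. pose proof (rho_pos q Hq). unfold J0_integrand, H0. field. lra. Qed.

Lemma J0_integrand_bound (q : R) : 0 < q <= pmax -> Rabs (J0_integrand q) <= 8.
Proof.
  intros Hq. pose proof (rho_pos q Hq). rewrite (J0_integrand_split q Hq).
  assert (Hu : 0 < exp (- Gamma rho q) <= 1).
  { split; [apply exp_pos |]. rewrite <- exp_0.
    destruct (Gamma_nonneg q Hq) as [Hg | <-]; [left; apply exp_increasing; lra | rewrite Ropp_0; lra]. }
  assert (Hs : 0 < q / (rho q + q) < 1).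
  { split; [apply Rdiv_lt_0_compat; lra |].
    apply (Rmult_lt_reg_r (rho q + q)); [lra |].
    unfold Rdiv. rewrite Rmult_assoc, Rinv_l by lra. lra. }
  set (u := exp (- Gamma rho q)) in *. set (s := q / (rho q + q)) in *.
  rewrite Rabs_right by nra. nra.
Qed.

Lemma J0_integrand_filterlim (F : (R -> Prop) -> Prop) {FF : Filter F} (r g c : R) :
  filterlim rho F (locally r) -> filterlim (Gamma rho) F (locally g) ->
  filterlim (fun y => y) F (locally c) -> r + c <> 0 ->
  filterlim J0_integrand F (locally (exp (- g) * / (r + c) * (r + r * exp (- g) + 6 * c * exp (- g)))).
Proof. intros Hr Hg Hc Hrc. unfold J0_integrand, H0. filterlim_arith. Qed.

Lemma J0_integrand_at_right_0 : filterlim J0_integrand (at_right 0) (locally 2).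
Proof.
  pose proof exp_neg_Gamma_at_right_0 as Hu.
  assert (Hs : filterlim (fun q => q / (rho q + q)) (at_right 0) (locally 0)).
  { apply (filterlim_le_le (F := at_right 0) (fun _ => 0) _ (fun q => q / rho q) 0);
      [| apply filterlim_const | apply ratio_at_right_0].
    apply (filter_imp (fun q => 0 < q < pmax)); [| apply at_right_lt, pmax_pos].
    intros q Hq. pose proof (rho_pos q ltac:(lra)). split.
    - left. apply Rdiv_lt_0_compat; lra.
    - apply Rmult_le_compat_l; [lra |]. apply Rinv_le_contravar; lra. }
  apply (filterlim_ext_loc (fun q => exp (- Gamma rho q) * (1 + exp (- Gamma rho q)) * (1 - q / (rho q + q))
                   + 6 * (exp (- Gamma rho q) * exp (- Gamma rho q)) * (q / (rho q + q)))).
  - apply (filter_imp (fun q => 0 < q < pmax)); [| apply at_right_lt, pmax_pos].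
    intros q Hq. symmetry. apply J0_integrand_split. lra.
  - apply (filterlim_locally_eq _ (1 * (1 + 1) * (1 - 0) + 6 * (1 * 1) * 0)); [ring |].
    filterlim_arith.
Qed.

Lemma continuous_J0_integrand (t : R) : 0 < t < pmax -> continuous rho t ->
  continuous J0_integrand t.
Proof.
  intros Ht Hc. pose proof (rho_pos t ltac:(lra)).
  apply (J0_integrand_filterlim (locally t)); [exact Hc | | apply filterlim_id | lra].
  apply (C0_on_continuous _ (t / 2) pmax); [apply Gamma_C0_on |]; lra.
Qed.

Lemma ex_RInt_J0_integrand (p : R) : 0 <= p <= pmax -> ex_RInt J0_integrand 0 p.
Proof.
  pose proof Heos as (_ & _ & _ & HC0 & _).
  destruct (piecewise_C0_partition rho 0 pmax HC0) as (n & x & Hx & Hpieces).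
  apply (ex_RInt_partition _ n x 0 pmax Hx).
  intros i Hi. destruct (Hpieces i Hi) as [Hcont [la [lb [Hla Hlb]]]].
  pose proof (partition_bounds n x 0 pmax Hx i ltac:(lia)).
  pose proof (partition_bounds n x 0 pmax Hx (S i) ltac:(lia)).
  pose proof (proj2 (proj2 Hx) i Hi).
  assert (Hpos : forall y, x i < y < x (S i) -> 0 <= rho y).
  { intros y Hy. left. apply rho_pos. lra. }
  assert (Hla0 : 0 <= la).
  { apply (filterlim_ge_const (F := at_right (x i)) rho 0 la); [| exact Hla].
    apply (filter_imp _ _ Hpos), at_right_lt. lra. }
  assert (Hlb0 : 0 <= lb).
  { apply (filterlim_ge_const (F := at_left (x (S i))) rho 0 lb); [| exact Hlb].
    apply (filter_imp _ _ Hpos), at_left_gt. lra. }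
  assert (Hright : exists l, filterlim J0_integrand (at_right (x i)) (locally l)).
  { destruct (Req_dec (x i) 0) as [Hx0 | Hx0].
    - exists 2. rewrite Hx0. exact J0_integrand_at_right_0.
    - eexists. apply (J0_integrand_filterlim (at_right (x i))); [exact Hla | | apply filterlim_id_within | lra].
      apply (C0_on_at_right _ (x i) pmax); [apply Gamma_C0_on |]; lra. }
  destruct Hright as [l Hl].
  eapply (ex_RInt_open_continuous _ (x i) (x (S i)) l); [lra | | exact Hl |].
  - intros t Ht. apply continuous_J0_integrand; [lra | apply Hcont, Ht].
  - apply (J0_integrand_filterlim (at_left (x (S i)))); [exact Hlb | | apply filterlim_id_within | lra].
    apply (C0_on_at_left _ (x (S i) / 2) pmax); [apply Gamma_C0_on |]; lra.
Qed.

Lemma RInt_J0_integrand_C0_on : C0_on (fun p => RInt J0_integrand 0 p) 0 pmax.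
Proof.
  (* [J0_integrand 0] is a junk value ([rho 0 + 0] may vanish), hence the [Rmax]. *)
  apply (lipschitz_C0_on _ _ _ (Rmax 8 (Rabs (J0_integrand 0)))). intros s t Hs Ht.
  pose proof (ex_RInt_J0_integrand t ltac:(lra)) as Ht'.
  rewrite <- (RInt_Chasles J0_integrand 0 s t).
  - rewrite Rplus_minus_l, Rmult_comm.
    apply abs_RInt_le_const; [lra | apply (ex_RInt_Chasles_2 J0_integrand 0); [lra | exact Ht'] |].
    intros q Hq. destruct (Req_dec q 0) as [-> | Hq0]; [apply Rmax_r |].
    eapply Rle_trans; [apply J0_integrand_bound; lra | apply Rmax_l].
  - apply (ex_RInt_Chasles_1 J0_integrand 0 s t); [lra | exact Ht'].
  - apply (ex_RInt_Chasles_2 J0_integrand 0 s t); [lra | exact Ht'].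
Qed.

Lemma J0_potential_C0_on (c : R) : 0 < c -> C0_on J0_potential c pmax.
Proof.
  intros Hc t Ht.
  pose proof (C0_on_restrict _ 0 pmax c RInt_J0_integrand_C0_on ltac:(lra) t Ht).
  pose proof (Gamma_C0_on c Hc t Ht). pose proof (filterlim_id_within (fun y => c <= y <= pmax) t).
  unfold J0_potential. filterlim_arith.
Qed.

Lemma J0_potential_at_right_0 : filterlim J0_potential (at_right 0) (locally 0).
Proof.
  pose proof exp_neg_Gamma_at_right_0 as Hu. pose proof (filterlim_id_within (fun y => 0 < y) 0) as Hid.
  pose proof (C0_on_at_right _ 0 pmax 0 RInt_J0_integrand_C0_on (conj (Rle_refl 0) pmax_pos)) as HR.
  apply (filterlim_locally_eq _ (RInt J0_integrand 0 0 - 2 * 0 * 1));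
    [rewrite RInt_point; unfold zero; simpl; ring |].
  unfold J0_potential. filterlim_arith.
Qed.

Lemma is_derive_J0_potential (t : R) : 0 < t < pmax -> continuous rho t ->
  is_derive J0_potential t (- (exp (- Gamma rho t) * / (rho t + t) * rho t) * I0 rho t).
Proof.
  intros Ht Hc. pose proof (rho_pos t ltac:(lra)).
  pose proof (is_derive_Gamma t Ht Hc) as HG.
  assert (HR : is_derive (fun p => RInt J0_integrand 0 p) t (J0_integrand t)).
  { apply (is_derive_RInt (V := R_NormedModule) _ _ 0); [| apply continuous_J0_integrand; assumption].
    apply (filter_imp (fun y => 0 < y < pmax)); [| apply locally_between; lra].
    intros y Hy. apply (RInt_correct (V := R_CompleteNormedModule)), ex_RInt_J0_integrand. lra. }
  assert (HE : is_derive (fun p => 2 * p * exp (- Gamma rho p)) t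
                 (2 * exp (- Gamma rho t) - 2 * t * / (rho t + t) * exp (- Gamma rho t))).
  { auto_derive; [exists (/ (rho t + t)); exact HG |].
    replace (Derive (fun x => Gamma rho x) t) with (/ (rho t + t))
      by (symmetry; apply is_derive_unique; exact HG).
    ring. }
  replace (- (exp (- Gamma rho t) * / (rho t + t) * rho t) * I0 rho t)
    with (J0_integrand t - (2 * exp (- Gamma rho t) - 2 * t * / (rho t + t) * exp (- Gamma rho t)))
    by (unfold J0_integrand, H0, I0; field; lra).
  exact (is_derive_minus _ _ _ _ _ HR HE).
Qed.

Lemma J0_potential_rate_pos (t : R) : 0 < t <= pmax ->
  0 < exp (- Gamma rho t) * / (rho t + t) * rho t.
Proof.
  intros Ht. pose proof (rho_pos t Ht). pose proof (exp_pos (- Gamma rho t)).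
  apply Rmult_lt_0_compat; [apply Rmult_lt_0_compat, Rinv_0_lt_compat |]; lra.
Qed.

Lemma nonneg_of_derive_nonneg (P : R -> R) :
  (forall t, 0 < t < pmax -> continuous rho t -> exists d, is_derive P t d /\ 0 <= d) ->
  filterlim P (at_right 0) (locally 0) -> (forall c, 0 < c <= pmax -> C0_on P c pmax) ->
  forall p, 0 < p <= pmax -> 0 <= P p.
Proof.
  intros Hd Hlim HC. pose proof Heos as (_ & _ & _ & HC0 & _).
  destruct (piecewise_C0_partition rho 0 pmax HC0) as (n & x & Hx & Hpieces).
  apply (partition_lower_bound P n x 0 pmax 0 Hx); [| exact Hlim | exact HC].
  intros i Hi t Ht. pose proof (partition_bounds n x 0 pmax Hx i ltac:(lia)).
  pose proof (partition_bounds n x 0 pmax Hx (S i) ltac:(lia)).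
  apply Hd; [lra | apply (proj1 (Hpieces i Hi)), Ht].
Qed.

Lemma J0_sign_of_I0_sign (s : R) :
  holds_on pmax (I0 rho) (fun v => 0 <= s * v) -> holds_on pmax (J0 rho) (fun v => 0 <= s * v).
Proof.
  intros HI p Hp. cbv beta in *.
  assert (HPhi : 0 <= - s * J0_potential p).
  { apply (nonneg_of_derive_nonneg (fun t => - s * J0_potential t)); [| | | exact Hp].
    - intros t Ht Hc. eexists. split.
      + apply (is_derive_scal J0_potential), is_derive_J0_potential; assumption.
      + pose proof (J0_potential_rate_pos t ltac:(lra)). pose proof (HI t ltac:(lra)). nra.
    - apply (filterlim_locally_eq _ (- s * 0)); [ring |].
      apply filterlim_Rmult; [apply filterlim_const | exact J0_potential_at_right_0].
    - intros c Hc. apply C0_on_scal, J0_potential_C0_on. lra. }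
  pose proof (rho_pos p Hp). pose proof (exp_pos (- Gamma rho p)). pose proof (HI p Hp).
  rewrite (J0_decomposition p Hp).
  replace (s * ((1 + exp (- Gamma rho p)) / 2 * I0 rho p - 3 * J0_potential p / rho p))
    with ((1 + exp (- Gamma rho p)) / 2 * (s * I0 rho p) + 3 * (- s * J0_potential p) / rho p)
    by (field; lra).
  apply Rplus_le_le_0_compat; [apply Rmult_le_pos | apply Rdiv_le_0_compat]; lra.
Qed.

Lemma I0_eq_of_J0_eq_0 (t : R) : 0 < t <= pmax -> J0 rho t = 0 ->
  I0 rho t = 6 * J0_potential t / ((1 + exp (- Gamma rho t)) * rho t).
Proof.
  intros Ht HJ. rewrite (J0_decomposition t Ht) in HJ.
  pose proof (rho_pos t Ht). pose proof (exp_pos (- Gamma rho t)).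
  apply (Rmult_eq_reg_l ((1 + exp (- Gamma rho t)) / 2)); [| lra].
  replace ((1 + exp (- Gamma rho t)) / 2 * I0 rho t) with (3 * J0_potential t / rho t) by lra.
  field. lra.
Qed.

Lemma I0_zero_of_J0_zero :
  holds_on pmax (J0 rho) (fun v => v = 0) -> holds_on pmax (I0 rho) (fun v => v = 0).
Proof.
  intros HJ p Hp. cbv beta in *.
  assert (HPhi : 0 <= - (J0_potential p * J0_potential p)).
  { apply (nonneg_of_derive_nonneg (fun t => - (J0_potential t * J0_potential t))); [| | | exact Hp].
    - intros t Ht Hc. pose proof (is_derive_J0_potential t Ht Hc) as HD.
      pose proof (J0_potential_rate_pos t ltac:(lra)) as Hw.
      set (w := exp (- Gamma rho t) * / (rho t + t) * rho t) in HD, Hw.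
      exists (2 * w * J0_potential t * I0 rho t). split.
      + auto_derive; [repeat split; eexists; exact HD |].
        replace (Derive (fun x => J0_potential x) t) with (- w * I0 rho t)
          by (symmetry; apply is_derive_unique; exact HD).
        ring.
      + pose proof (rho_pos t ltac:(lra)). pose proof (exp_pos (- Gamma rho t)).
        rewrite (I0_eq_of_J0_eq_0 t ltac:(lra) (HJ t ltac:(lra))).
        replace (2 * w * J0_potential t * (6 * J0_potential t / ((1 + exp (- Gamma rho t)) * rho t)))
          with (12 * w * (J0_potential t * J0_potential t) / ((1 + exp (- Gamma rho t)) * rho t))
          by (field; lra).
        apply Rdiv_le_0_compat; [| nra]. apply Rmult_le_pos; [lra | nra].
    - apply (filterlim_locally_eq _ (- (0 * 0))); [ring |].
      pose proof J0_potential_at_right_0. filterlim_arith.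
    - intros c Hc t Ht. pose proof (J0_potential_C0_on c ltac:(lra) t Ht). filterlim_arith. }
  assert (Hzero : J0_potential p = 0) by nra.
  rewrite (I0_eq_of_J0_eq_0 p Hp (HJ p Hp)), Hzero. unfold Rdiv. ring.
Qed.

End EquationOfState.

Theorem proposition4 :
  (* {I1 <= 0} ⊂ {I0 <= 0} ⊂ {J0 <= 0} *)
  (forall (rho : R -> R) (pmax : R), eos1 rho pmax ->
     I1_holds_on rho pmax (fun v => v <= 0) -> holds_on pmax (I0 rho) (fun v => v <= 0)) /\
  (forall (rho : R -> R) (pmax : R), eos rho pmax ->
     holds_on pmax (I0 rho) (fun v => v <= 0) -> holds_on pmax (J0 rho) (fun v => v <= 0)) /\
  (* {I1 ≡ 0} = {I0 ≡ 0} = {J0 ≡ 0} *)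
  (forall (rho : R -> R) (pmax : R), eos1 rho pmax ->
     (I1_holds_on rho pmax (fun v => v = 0) <-> holds_on pmax (I0 rho) (fun v => v = 0))) /\
  (forall (rho : R -> R) (pmax : R), eos rho pmax ->
     (holds_on pmax (I0 rho) (fun v => v = 0) <-> holds_on pmax (J0 rho) (fun v => v = 0))) /\
  (* {I1 >= 0} ⊂ {I0 >= 0} ⊂ {J0 >= 0} *)
  (forall (rho : R -> R) (pmax : R), eos1 rho pmax ->
     I1_holds_on rho pmax (fun v => v >= 0) -> holds_on pmax (I0 rho) (fun v => v >= 0)) /\
  (forall (rho : R -> R) (pmax : R), eos rho pmax ->
     holds_on pmax (I0 rho) (fun v => v >= 0) -> holds_on pmax (J0 rho) (fun v => v >= 0)).
Proof.
  split; [| split; [| split; [| split; [| split]]]].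
  - intros rho pmax (E & HC & HC1) HI p Hp. cbv beta.
    enough (0 <= -1 * I0 rho p) by lra.
    apply (I0_sign_of_I1_sign rho pmax E (-1) HC HC1); [| exact Hp].
    intros q d Hq Hd. specialize (HI q d Hq Hd). cbv beta in *. lra.
  - intros rho pmax E HI p Hp. cbv beta.
    enough (0 <= -1 * J0 rho p) by lra.
    apply (J0_sign_of_I0_sign rho pmax E (-1)); [| exact Hp].
    intros q Hq. specialize (HI q Hq). cbv beta in *. lra.
  - intros rho pmax (E & HC & HC1). split; [| apply I1_zero_of_I0_zero, E].
    intros HI p Hp. cbv beta.
    enough (0 <= 1 * I0 rho p /\ 0 <= -1 * I0 rho p) by lra.
    split; apply (I0_sign_of_I1_sign rho pmax E _ HC HC1); try exact Hp;
      intros q d Hq Hd; specialize (HI q d Hq Hd); cbv beta in *; lra.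
  - intros rho pmax E. split; [| apply I0_zero_of_J0_zero, E].
    intros HI p Hp. cbv beta.
    enough (0 <= 1 * J0 rho p /\ 0 <= -1 * J0 rho p) by lra.
    split; apply (J0_sign_of_I0_sign rho pmax E); try exact Hp;
      intros q Hq; specialize (HI q Hq); cbv beta in *; lra.
  - intros rho pmax (E & HC & HC1) HI p Hp. cbv beta.
    enough (0 <= 1 * I0 rho p) by lra.
    apply (I0_sign_of_I1_sign rho pmax E 1 HC HC1); [| exact Hp].
    intros q d Hq Hd. specialize (HI q d Hq Hd). cbv beta in *. lra.
  - intros rho pmax E HI p Hp. cbv beta.
    enough (0 <= 1 * J0 rho p) by lra.
    apply (J0_sign_of_I0_sign rho pmax E 1); [| exact Hp].
    intros q Hq. specialize (HI q Hq). cbv beta in *. lra.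
Qed.
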